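(* Let $\mathfrak g$ be a Lie algebra of matrices on which $(V,W)\mapsto\mathrm{Tr}(VW)$ is nondegenerate, fix $A\in\mathfrak g$ and $n\ge0$, and let $\mathcal M_A$, $P_0$, $P_1$ be as in the context. Let $F$ be a smooth function on $\mathcal M_A$ and, for a parameter $\lambda$, let $(\dot X_0,\dots,\dot X_n)=(P_1-\lambda P_0)\,dF$ be the Hamiltonian vector field of $F$ with respect to the pencil $P_1-\lambda P_0$. Then, identifying the pencil parameter $\lambda$ with the variable $\lambda$ in $X(\lambda)$, one has the identity of polynomials in $\lambda$ $$\sum_{i=0}^n\lambda^i\dot X_i=\Big[\frac{\partial F}{\partial X_0},X(\lambda)\Big].$$
   Context: $\mathcal M_A=\{X(\lambda)=\lambda^{n+1}A+\sum_{i=0}^n\lambda^iX_i\mid X_i\in\mathfrak g\}\cong\bigoplus_{i=0}^n\mathfrak g$. Tangent and cotangent spaces are identified with $\bigoplus_{i=0}^n\mathfrak g$ via the pairing $\langle(V_i),(W_i)\rangle=\sum_{i=0}^n\mathrm{Tr}(V_iW_i)$; for a function $F$, $dF=(\partial F/\partial X_0,\dots,\partial F/\partial X_n)$ with respect to this pairing. Put $X_{n+1}:=A$ and $X_m:=0$ for $m>n+1$. The Poisson tensors are: $P_0:(W_0,\dots,W_n)\mapsto(\dot X_0,\dots,\dot X_n)$ with $\dot X_i=\sum_{j=0}^{n-i}[X_{i+j+1},W_j]$; and $P_1:(W_0,\dots,W_n)\mapsto(\dot X_0,\dots,\dot X_n)$ with $\dot X_0=-[X_0,W_0]$ and $\dot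 X_i=\sum_{j=1}^{n+1-i}[X_{i+j},W_j]$ for $1\le i\le n$. *)

From HB Require Import structures.
From mathcomp Require Import all_boot all_order all_algebra.
From mathcomp Require Import all_classical all_reals all_analysis.
Set Implicit Arguments. Unset Strict Implicit. Unset Printing Implicit Defensive.
Import Order.TTheory GRing.Theory Num.Theory.
Local Open Scope ring_scope.

Section Pencil.
Variables (R : realType) (N n : nat).
Local Notation mat := 'M[R]_N.

Definition lieb (a b : mat) : mat := a *m b - b *m a.

Definition Xext (A : mat) (X : 'I_n.+1 -> mat) (m : nat) : mat :=
  if (m < n.+1)%N then X (inord m) else if m == n.+1 then A else 0.

Definition Wext (W : 'I_n.+1 -> mat) (m : nat) : mat :=
  if (m < n.+1)%N then W (inord m) else 0.

Definition P0 (A : mat) (X W : 'I_n.+1 -> mat) (i : 'I_n.+1) : mat :=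
  \sum_(0 <= j < (n - i).+1) lieb (Xext A X (i + j).+1) (Wext W j).

Definition P1 (A : mat) (X W : 'I_n.+1 -> mat) (i : 'I_n.+1) : mat :=
  if val i == 0%N then - lieb (X i) (W i)
  else \sum_(1 <= j < (n.+1 - i).+1) lieb (Xext A X (i + j)) (Wext W j).

Definition pairing (V W : 'I_n.+1 -> mat) : R := \sum_(i < n.+1) \tr (V i *m W i).

Definition Xpoly (A : mat) (X : 'I_n.+1 -> mat) (l : R) : mat :=
  l ^+ n.+1 *: A + \sum_(i < n.+1) l ^+ i *: X i.

Definition is_gradient (g : {vspace mat}) (F : ('I_n.+1 -> mat) -> R)
    (dF : ('I_n.+1 -> mat) -> ('I_n.+1 -> mat)) : Prop :=
  forall X : 'I_n.+1 -> mat, (forall i, X i \in g) ->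
    (forall i, dF X i \in g) /\
    forall V : 'I_n.+1 -> mat, (forall i, V i \in g) ->
      is_derive (0 : R) 1 (fun t : R => F (fun i => X i + t *: V i)) (pairing (dF X) V).

End Pencil.

From HB Require Import structures.
From mathcomp Require Import all_boot all_order all_algebra.
From mathcomp Require Import all_classical all_reals all_analysis.
Import Order.TTheory GRing.Theory Num.Theory.
Local Open Scope ring_scope.

(* For i >= 1 the i-th component of P_1 W is the (i-1)-st component of P_0 W
   minus [X_i, W_0].  Hence in sum_i l^i (P_1 W - l P_0 W)_i the P_0 terms
   telescope, leaving -sum_{i<=n} l^i [X_i, W_0] - l^(n+1) [A, W_0], which is
   [W_0, X(l)].  The identity holds for every covector W. *)

Section Commutator.
Variables (R : realType) (N : nat).
Implicit Types a b c : 'M[R]_N.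

Lemma liebDr a b c : lieb a (b + c) = lieb a b + lieb a c.
Proof. by rewrite /lieb mulmxDr mulmxDl opprD addrACA. Qed.

Lemma lieb0r a : lieb a 0 = 0.
Proof. by rewrite /lieb mulmx0 mul0mx subrr. Qed.

Lemma liebZr a k b : lieb a (k *: b) = k *: lieb a b.
Proof. by rewrite /lieb scalerBr scalemxAr scalemxAl. Qed.

Lemma lieb_sumr a (I : finType) (f : I -> 'M[R]_N) :
  lieb a (\sum_i f i) = \sum_i lieb a (f i).
Proof. exact: (big_morph (lieb a) (liebDr a) (lieb0r a)). Qed.

Lemma opp_lieb a b : - lieb a b = lieb b a.
Proof. by rewrite /lieb opprB. Qed.

End Commutator.

Section Pencil.
Variables (R : realType) (N n : nat) (A : 'M[R]_N) (X W : 'I_n.+1 -> 'M[R]_N).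

Lemma Xext_ord (i : 'I_n.+1) : Xext A X i = X i.
Proof. by rewrite /Xext ltn_ord inord_val. Qed.

Lemma Xext_top : Xext A X n.+1 = A.
Proof. by rewrite /Xext ltnn eqxx. Qed.

Lemma Wext0 : Wext W 0 = W ord0.
Proof. by rewrite /Wext /=; congr W; apply: val_inj; rewrite /= inordK. Qed.

Lemma P1_ord0 : P1 A X W ord0 = - lieb (X ord0) (W ord0).
Proof. by []. Qed.

Lemma P1_lift (i : 'I_n) :
  P1 A X W (lift ord0 i)
  = P0 A X W (widen_ord (leqnSn n) i) - lieb (X (lift ord0 i)) (W ord0).
Proof.
rewrite /P1 /P0 /= /bump leq0n add1n subSS [in RHS]big_nat_recl // addn0 Wext0.
rewrite (Xext_ord (lift ord0 i) : Xext A X i.+1 = _) addrAC subrr add0r big_add1.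
by apply: eq_bigr => j _; rewrite addSn.
Qed.

Lemma P0_ord_max : P0 A X W ord_max = lieb A (W ord0).
Proof. by rewrite /P0 /= subnn big_nat1 addn0 Xext_top Wext0. Qed.

Lemma pencil_sum_lieb (l : R) :
  \sum_(i < n.+1) l ^+ i *: (P1 A X W i - l *: P0 A X W i)
  = lieb (W ord0) (Xpoly A X l).
Proof.
pose P0' i := P0 A X W (widen_ord (leqnSn n) i).
have P1_sum : \sum_(i < n.+1) l ^+ i *: P1 A X W i
    = \sum_(i < n) l ^+ i.+1 *: P0' i - \sum_(i < n.+1) l ^+ i *: lieb (X i) (W ord0).
  rewrite [LHS]big_ord_recl [X in _ - X]big_ord_recl P1_ord0 expr0 !scale1r.
  under eq_bigr do rewrite P1_lift scalerBr.
  by rewrite sumrB addrCA [in RHS]opprD.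
have P0_sum : \sum_(i < n.+1) l ^+ i *: (l *: P0 A X W i)
    = \sum_(i < n) l ^+ i.+1 *: P0' i + l ^+ n.+1 *: lieb A (W ord0).
  rewrite big_ord_recr P0_ord_max scalerA -exprSr.
  by under eq_bigr do rewrite scalerA -exprSr.
have lieb_Xpoly : lieb (W ord0) (Xpoly A X l)
    = - (l ^+ n.+1 *: lieb A (W ord0) + \sum_(i < n.+1) l ^+ i *: lieb (X i) (W ord0)).
  rewrite /Xpoly liebDr liebZr lieb_sumr opprD -scalerN opp_lieb -sumrN.
  by congr (_ + _); apply: eq_bigr => i _; rewrite liebZr -scalerN opp_lieb.
under eq_bigr do rewrite scalerBr.
by rewrite sumrB P1_sum P0_sum lieb_Xpoly opprD addrACA subrr add0r addrC -opprD.
Qed.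

End Pencil.

Theorem mainTheorem2 (R : realType) (N n : nat) (g : {vspace 'M[R]_N})
  (g_lie : forall a b, a \in g -> b \in g -> lieb a b \in g)
  (g_nondeg : forall a, a \in g -> (forall b, b \in g -> \tr (a *m b) = 0) -> a = 0)
  (A : 'M[R]_N) (HA : A \in g)
  (F : ('I_n.+1 -> 'M[R]_N) -> R) (dF : ('I_n.+1 -> 'M[R]_N) -> ('I_n.+1 -> 'M[R]_N))
  (HdF : is_gradient g F dF)
  (X : 'I_n.+1 -> 'M[R]_N) (HX : forall i, X i \in g) (l : R) :
  \sum_(i < n.+1) l ^+ i *: (P1 A X (dF X) i - l *: P0 A X (dF X) i)
  = lieb (dF X ord0) (Xpoly A X l).
Proof. exact: pencil_sum_lieb. Qed.
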